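(* Let $P$ be a distribution on $\mathcal{X}$, $R>0$, $K>0$. Then \[ \lim_{\epsilon\searrow 0^{+}} E_e(P,R,K,\epsilon)=E_e(P,R,K,0), \] where for $\epsilon\in\mathbb{R}$, $E_e(P,R,K,\epsilon)=\min\{E_1(P,R,K,\epsilon),E_2(P,R,K,\epsilon)\}$ with \[ E_1(P,R,K,\epsilon)=\min_{TV\widetilde{V}:\; B_{T\widetilde{V}}\le B_{TV}+\epsilon\le K} F(TV,T\widetilde{V}),\qquad E_2(P,R,K,\epsilon)=\min_{TV\widetilde{V}:\; B_{TV}+\epsilon\ge K} F(TV,T\widetilde{V}), \] \[ F(TV,T\widetilde{V})=D(TV\|PW)+\big|A_{T\widetilde{V}}-R+|B_{T\widetilde{V}}-K|^{+}\big|^{+}. \]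
   Context: $\mathcal{X},\mathcal{Y}$ are finite alphabets and $W(y|x)$ is a conditional distribution of $y\in\mathcal{Y}$ given $x\in\mathcal{X}$. Logs are natural. $TV$, $T\widetilde{V}$ denote joint distributions on $\mathcal{Y}\times\mathcal{X}$ with common $\mathcal{Y}$-marginal $T$ and conditionals $V(x|y)$, $\widetilde{V}(x|y)$; minima are over all such triples (the minimum over an empty set is $+\infty$). $PW$ is the joint distribution $P(x)W(y|x)$; $D(TV\|PW)=\sum T(y)V(x|y)\log\frac{T(y)V(x|y)}{P(x)W(y|x)}$; $A_{TV}=\sum T(y)V(x|y)\log\frac{V(x|y)}{P(x)}$; $B_{TV}=\mathbb{E}_{TV}[-\log W(Y|X)]$; $|t|^{+}=\max\{0,t\}$. *)

From HB Require Import structures.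
From mathcomp Require Import all_boot all_order all_algebra.
From mathcomp Require Import all_classical all_reals all_analysis.
Set Implicit Arguments. Unset Strict Implicit. Unset Printing Implicit Defensive.
Import Order.TTheory GRing.Theory Num.Theory.
Local Open Scope classical_set_scope.
Local Open Scope ring_scope.

Section Defs.
Context {R : realType} {X Y : finType}.

Definition is_dist {A : finType} (p : A -> R) :=
  (forall a, 0 <= p a) /\ \sum_(a : A) p a = 1.

Definition is_cond {A B : finType} (c : A -> B -> R) := forall a, is_dist (c a).

(* triples (T, V, Vt): T on Y, V(x|y) = V y x, Vt(x|y) = Vt y x *)
Definition triple := ((Y -> R) * (Y -> X -> R) * (Y -> X -> R))%type.

Definition triples : set triple :=
  [set t | is_dist t.1.1 /\ is_cond t.1.2 /\ is_cond t.2].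

Local Open Scope ereal_scope.

(* D(TV || PW) with conventions 0 log(0/q) = 0, p log(p/0) = +oo (p > 0) *)
Definition Dkl (W : X -> Y -> R) (P : X -> R) (T : Y -> R) (V : Y -> X -> R)
  : \bar R :=
  \sum_(y : Y) \sum_(x : X)
    (if (T y * V y x == 0)%R then 0
     else if (P x * W x y == 0)%R then +oo
     else ((T y * V y x) * ln ((T y * V y x) / (P x * W x y)))%:E).

Definition Aq (P : X -> R) (T : Y -> R) (V : Y -> X -> R) : \bar R :=
  \sum_(y : Y) \sum_(x : X)
    (if (T y * V y x == 0)%R then 0
     else if (P x == 0)%R then +oo
     else ((T y * V y x) * ln (V y x / P x))%:E).

Definition Bq (W : X -> Y -> R) (T : Y -> R) (V : Y -> X -> R) : \bar R :=
  \sum_(y : Y) \sum_(x : X)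
    (if (T y * V y x == 0)%R then 0
     else if (W x y == 0)%R then +oo
     else ((T y * V y x) * - ln (W x y))%:E).

Definition pospart (t : \bar R) : \bar R := maxe 0 t.

Definition Ffun (W : X -> Y -> R) (P : X -> R) (Rr K : R) (t : triple) : \bar R :=
  Dkl W P t.1.1 t.1.2 +
  pospart (Aq P t.1.1 t.2 - Rr%:E + pospart (Bq W t.1.1 t.2 - K%:E)).

Definition E1 (W : X -> Y -> R) (P : X -> R) (Rr K eps : R) : \bar R :=
  ereal_inf (Ffun W P Rr K @`
    [set t | triples t /\
       Bq W t.1.1 t.2 <= Bq W t.1.1 t.1.2 + eps%:E /\
       Bq W t.1.1 t.1.2 + eps%:E <= K%:E]).

Definition E2 (W : X -> Y -> R) (P : X -> R) (Rr K eps : R) : \bar R :=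
  ereal_inf (Ffun W P Rr K @`
    [set t | triples t /\ Bq W t.1.1 t.1.2 + eps%:E >= K%:E]).

Definition Ee (W : X -> Y -> R) (P : X -> R) (Rr K eps : R) : \bar R :=
  mine (E1 W P Rr K eps) (E2 W P Rr K eps).

End Defs.

From HB Require Import structures.
From mathcomp Require Import all_boot all_order all_algebra.
From mathcomp Require Import all_classical all_reals all_analysis.
From mathcomp Require Import ring lra.
Set Implicit Arguments. Unset Strict Implicit. Unset Printing Implicit Defensive.
Import Order.TTheory GRing.Theory Num.Theory numFieldNormedType.Exports.
Local Open Scope classical_set_scope.
Local Open Scope ring_scope.

(* Enlarging eps only relaxes the constraints: Ee(eps) is the infimum of F
   over the triples with min(K, B_{TV~}) <= B_{TV} + eps, so it is nonincreasing
   and its right limit at 0 exists and is at most Ee(0).  Conversely, if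
   Ee(eps) < c for every eps > 0, then the sets of triples with F <= c satisfying
   the eps-constraint are nonempty, closed and nested in the compact cube of
   triples: F is finite exactly on the triples with TV, TV~ << PW, a closed
   condition on which F is continuous.  A common point of these sets is feasible
   for eps = 0, whence Ee(0) <= c. *)

Section RealFacts.
Context {R : realType}.

Lemma lee_of_EFin_lt (x y : \bar R) :
  (forall c : R, (c%:E < x)%E -> (c%:E <= y)%E) -> (x <= y)%E.
Proof.
move=> below; rewrite leNgt; apply/negP => yx.
move: x y below yx => [r| |] [s| |] //= below.
- rewrite lte_fin => sr; have /below : (((r + s) / 2)%:E < r%:E)%E.
    by rewrite lte_fin; lra.
  by rewrite lee_fin; lra.
- by move=> _; have /below : ((r - 1)%:E < r%:E)%E by rewrite lte_fin; lra.
- move=> _; have /below : ((s + 1)%:E < +oo)%E by rewrite ltey.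
  rewrite lee_fin; lra.
- by move=> _; have /below : ((0 : R)%:E < +oo)%E by exact: ltry.
Qed.

Lemma nonincreasing_cvg_at_right (f : R -> \bar R) (a : R) :
  nonincreasing_fun f ->
  (forall c : R, (c%:E < f a)%E -> exists2 d, a < d & (c%:E <= f d)%E) ->
  f x @[x --> a^'+] --> f a.
Proof.
move=> f_noninc f_lsc.
have := @nonincreasing_at_right_cvge R f a (BInfty _ false) ltac:(by [])
  (in2W f_noninc).
set s := ereal_sup _; suff -> : s = f a by [].
apply/eqP; rewrite eq_le; apply/andP; split.
  by apply: ge_ereal_sup => _ [x + <-]; rewrite /= in_itv /= andbT => /ltW/f_noninc.
apply: lee_of_EFin_lt => c /f_lsc[d ad cd]; apply: (le_trans cd).
by apply: ereal_sup_ubound; exists d; rewrite //= in_itv /= ad.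
Qed.

Lemma normr_xlnx_le (v : R) : 0 < v <= 1 -> `|v * ln v| <= 2 * Num.sqrt v.
Proof.
move=> /andP[v_gt0 v_le1]; set s := Num.sqrt v.
have s_gt0 : 0 < s by rewrite sqrtr_gt0.
have vE : v = s * s by rewrite -expr2 sqr_sqrtr // ltW.
rewrite ler0_norm; last by rewrite mulr_ge0_le0 ?ln_le0 // ltW.
have lnsV : - ln s < s^-1 by rewrite -lnV ?posrE // ln_sublinear // invr_gt0.
have -> : - (v * ln v) = 2 * (s * s) * - ln s.
  by rewrite vE lnM ?posrE //; ring.
have : s * s * - ln s < s * s * s^-1 by rewrite ltr_pM2l ?mulr_gt0.
rewrite mulrA -[s * s * s^-1]mulrA mulfV ?gt_eqF // mulr1; nra.
Qed.

Lemma continuous_mul_ln_div (q : R) : 0 < q ->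
  continuous (fun u : R => u * ln (u / q)).
Proof.
move=> q_gt0 u; have [u_lt0|u_gt0|->] := ltgtP u 0.
- (* [ln] vanishes on nonpositive reals. *)
  apply: cvg_near_cst; apply: filterS (lt_nbhsl u_lt0) => v v_lt0 /=.
  by rewrite !ln0 ?mulr0 // pmulr_lle0 ?invr_gt0 // ltW.
- apply: cvgM; first exact: cvg_id.
  have div_cont : {for u, continuous (fun v : R => v / q)} by exact: cvgMr_tmp.
  have ln_cont : {for u / q, continuous (@ln R)}.
    by apply: continuous_ln; rewrite divr_gt0.
  exact: (continuous_comp div_cont ln_cont).
pose h (v : R) := 2 * Num.sqrt `|v| + `|v| * `|ln q|.
have h_cvg : h v @[v --> 0] --> 0.
  have h0 : h 0 = 0 by rewrite /h normr0 sqrtr0 !mul0r mulr0 addr0.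
  suff : h v @[v --> 0] --> h 0 by rewrite h0.
  rewrite /h; apply: cvgD; last by apply: cvgMr_tmp; exact: norm_continuous.
  apply: cvgMl_tmp.
  exact: (continuous_comp (@norm_continuous _ R^o 0) (@sqrt_continuous R _)).
have Nh_cvg : - h v @[v --> 0] --> - 0 by exact: cvgN.
rewrite oppr0 in Nh_cvg.
rewrite /continuous_at mul0r.
apply: (@squeeze_cvgr _ _ _ R (fun v => - h v) h _ _ _ Nh_cvg h_cvg).
near=> v; rewrite -ler_norml /h.
have : `|v| < 1 by near: v; exact: (@nbhs0_lt _ R^o).
have [v_le0 _|v_gt0] := lerP v 0.
  rewrite ln0 ?mulr0 ?normr0 ?addr_ge0 ?mulr_ge0 ?sqrtr_ge0 //.
  by rewrite pmulr_lle0 ?invr_gt0.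
rewrite gtr0_norm // => v_lt1.
rewrite ln_div ?posrE // mulrBr (le_trans (ler_normB _ _)) // lerD //.
  by rewrite normr_xlnx_le // v_gt0 ltW.
by rewrite normrM gtr0_norm.
Unshelve. all: by end_near.
Qed.
End RealFacts.

Lemma compact_nested_closed {R : realFieldType} {T : topologicalType}
    (A : set T) (C : R -> set T) :
  compact A -> (forall d, 0 < d -> C d `<=` A) ->
  (forall d, 0 < d -> closed (C d)) -> (forall d, 0 < d -> C d !=set0) ->
  (forall d1 d2, 0 < d1 -> d1 <= d2 -> C d1 `<=` C d2) ->
  exists p, forall d, 0 < d -> C d p.
Proof.
move=> A_compact CA C_closed C_neq0 C_nested.
have C_filter : ProperFilter (filter_from [set d | 0 < d] C).
  apply: filter_from_proper; last by move=> d /C_neq0.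
  apply: filter_from_filter; first by exists 1; rewrite /= ltr01.
  move=> d1 d2 d1_gt0 d2_gt0; exists (Num.min d1 d2).
    by rewrite /= lt_min d1_gt0.
  move=> p Cp; split; apply: C_nested Cp; rewrite ?lt_min ?d1_gt0 //.
  - by rewrite ge_min lexx.
  - by rewrite ge_min lexx orbT.
have [|p [_ p_cluster]] := A_compact _ C_filter.
  by exists 1; [rewrite /= ltr01 | exact: CA ltr01].
exists p => d d_gt0; apply: (C_closed d d_gt0) => B /p_cluster; apply.
by exists d.
Qed.

Section GuardedSums.
Context {R : realDomainType} {I J : finType}.
Local Open Scope ereal_scope.

Definition guarded (u q r : R) : \bar R :=
  if (u == 0)%R then 0 else if (q == 0)%R then +oo else r%:E.

Definition guarded_sum (u q r : I -> J -> R) : \bar R :=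
  \sum_i \sum_j guarded (u i j) (q i j) (r i j).

Lemma guarded_neqNy u q r : guarded u q r != -oo.
Proof. by rewrite /guarded; case: ifP => //; case: ifP. Qed.

Lemma sum_guarded_neqNy {K : finType} (u q r : K -> R) :
  \sum_k guarded (u k) (q k) (r k) != -oo.
Proof.
apply/negP => /eqP/esum_eqNyP[k [_ _ /eqP]].
by rewrite (negbTE (guarded_neqNy _ _ _)).
Qed.

Lemma guarded_sum_neqNy u q r : guarded_sum u q r != -oo.
Proof.
apply/negP => /eqP/esum_eqNyP[i [_ _ /eqP]].
by rewrite (negbTE (sum_guarded_neqNy _ _ _)).
Qed.

Lemma guarded_sum_support u q r : guarded_sum u q r != +oo ->
  forall i j, q i j = 0%R -> u i j = 0%R.
Proof.
move=> sum_fin i j q0; apply/eqP/negPn/negP => u_neq0; move/negP: sum_fin; apply.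
rewrite esum_eqy; last by move=> k _; exact: sum_guarded_neqNy.
apply/existsP; exists i; rewrite /= esum_eqy; last first.
  by move=> l _; exact: guarded_neqNy.
by apply/existsP; exists j; rewrite /= /guarded (negbTE u_neq0) q0 eqxx.
Qed.

Lemma guarded_sumE u q r :
  (forall i j, q i j = 0%R -> u i j = 0%R) ->
  (forall i j, u i j = 0%R -> r i j = 0%R) ->
  guarded_sum u q r = (\sum_i \sum_j (if q i j == 0 then 0 else r i j))%:E.
Proof.
move=> qu ur; rewrite -sumEFin; apply: eq_bigr => i _.
rewrite -sumEFin; apply: eq_bigr => j _; rewrite /guarded.
have [/eqP u0|u_neq0] := ifPn; first by rewrite ur // if_same.
by case: ifPn => [/eqP/qu/eqP|//]; rewrite (negbTE u_neq0).
Qed.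

End GuardedSums.

Section ContinuityClosedness.
Context {R : realType} {T : topologicalType}.
Implicit Types g h : T -> R.

Lemma continuous_sumr {I : finType} (F : I -> T -> R) :
  (forall i, continuous (F i)) -> continuous (fun x => \sum_i F i x).
Proof.
move=> F_cont; apply: continuous_big => //.
exact: (@pseudometric_normed_Zmodule.add_continuous R R^o).
Qed.

Lemma continuous_add g h : continuous g -> continuous h ->
  continuous (fun x => g x + h x).
Proof. by move=> g_cont h_cont x; apply: cvgD; [exact: g_cont | exact: h_cont]. Qed.

Lemma continuous_mul g h : continuous g -> continuous h ->
  continuous (fun x => g x * h x).
Proof. by move=> g_cont h_cont x; apply: cvgM; [exact: g_cont | exact: h_cont]. Qed.

Lemma continuous_maxl (k : R) g :
  continuous g -> continuous (fun x => Num.max k (g x)).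
Proof.
move=> g_cont x; apply: (@continuous_max _ _ (fun=> k) g); last exact: g_cont.
exact: cst_continuous.
Qed.

Lemma continuous_minl (k : R) g :
  continuous g -> continuous (fun x => Num.min k (g x)).
Proof.
move=> g_cont x; apply: (@continuous_min _ _ (fun=> k) g); last exact: g_cont.
exact: cst_continuous.
Qed.

Lemma closed_le_continuous g h : continuous g -> continuous h ->
  closed [set x | g x <= h x].
Proof.
move=> g_cont h_cont.
have -> : [set x | g x <= h x] = (g - h) @^-1` [set r | r <= 0].
  by apply/seteqP; split => x /=; rewrite subr_le0.
apply: preimage_closed; last exact: closed_le.
by move=> x _; apply: (@continuousB _ R^o); [exact: g_cont | exact: h_cont].
Qed.

Lemma closed_eq_continuous g h : continuous g -> continuous h ->
  closed [set x | g x = h x].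
Proof.
move=> g_cont h_cont.
have -> : [set x | g x = h x] = (g - h) @^-1` [set r | r = 0].
  apply/seteqP; split => x /=; first by move=> gh; apply/eqP; rewrite subr_eq0 gh.
  by move/eqP; rewrite subr_eq0 => /eqP.
apply: preimage_closed; last exact: closed_eq.
by move=> x _; apply: (@continuousB _ R^o); [exact: g_cont | exact: h_cont].
Qed.

Lemma closed_forall {I : Type} (A : I -> set T) :
  (forall i, closed (A i)) -> closed [set x | forall i, A i x].
Proof.
by move=> A_closed x x_cl i; apply: A_closed => B /x_cl[y [/(_ i)]]; exists y.
Qed.

Lemma closed_is_dist {A : finType} (p : T -> A -> R) :
  (forall a, continuous (p^~ a)) -> closed [set x | is_dist (p x)].
Proof.
move=> p_cont; apply: closedI.
  apply: closed_forall => a; apply: closed_le_continuous => //.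
  exact: cst_continuous.
by apply: closed_eq_continuous; [exact: continuous_sumr | exact: cst_continuous].
Qed.

End ContinuityClosedness.

Section PosPart.
Context {R : realType}.
Local Open Scope ereal_scope.

Lemma pospart_ge0 (x : \bar R) : 0 <= pospart x.
Proof. by rewrite /pospart le_max lexx. Qed.

Lemma pospart_neqNy (x : \bar R) : pospart x != -oo.
Proof. by apply: contraTneq (pospart_ge0 x) => ->. Qed.

Lemma pospartyE : pospart (+oo : \bar R) = +oo.
Proof. by rewrite /pospart max_r ?leey. Qed.

Lemma add_pospart_neqy (d a b : \bar R) (r k : R) :
  d != -oo -> a != -oo -> b != -oo ->
  d + pospart (a - r%:E + pospart (b - k%:E)) != +oo ->
  [/\ d != +oo, a != +oo & b != +oo].
Proof.
move: d a b => [d| |] [a| |] [b| |] //=.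
all: rewrite ?pospartyE ?addey ?addye ?pospart_neqNy //.
all: by rewrite /pospart max_r ?leey // addey.
Qed.

End PosPart.

Section RateFunction.
Context {R : realType} {X Y : finType} (W : X -> Y -> R) (P : X -> R) (Rr K : R).
Local Notation triple := (@triple R X Y).
Implicit Types (T : Y -> R) (V : Y -> X -> R) (t : triple).

Definition Dkl_real T V : R := \sum_y \sum_x
  (if P x * W x y == 0 then 0 else T y * V y x * ln (T y * V y x / (P x * W x y))).

Definition Aq_real T V : R := \sum_y \sum_x
  (if P x == 0 then 0 else T y * V y x * ln (V y x / P x)).

Definition Bq_real T V : R := \sum_y \sum_x
  (if W x y == 0 then 0 else T y * V y x * - ln (W x y)).

Definition Ffun_real t : R := Dkl_real t.1.1 t.1.2 +
  Num.max 0 (Aq_real t.1.1 t.2 - Rr + Num.max 0 (Bq_real t.1.1 t.2 - K)).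

Lemma Dkl_guarded T V : Dkl W P T V = guarded_sum (fun y x => T y * V y x)
  (fun y x => P x * W x y)
  (fun y x => T y * V y x * ln (T y * V y x / (P x * W x y))).
Proof. by []. Qed.

Lemma Aq_guarded T V : Aq P T V = guarded_sum (fun y x => T y * V y x)
  (fun y x => P x) (fun y x => T y * V y x * ln (V y x / P x)).
Proof. by []. Qed.

Lemma Bq_guarded T V : Bq W T V = guarded_sum (fun y x => T y * V y x)
  (fun y x => W x y) (fun y x => T y * V y x * - ln (W x y)).
Proof. by []. Qed.

Lemma Dkl_EFin T V : (forall y x, P x * W x y = 0 -> T y * V y x = 0) ->
  Dkl W P T V = (Dkl_real T V)%:E.
Proof.
by move=> TV_PW; rewrite Dkl_guarded guarded_sumE // => y x ->; rewrite mul0r.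
Qed.

Lemma Aq_EFin T V : (forall y x, P x = 0 -> T y * V y x = 0) ->
  Aq P T V = (Aq_real T V)%:E.
Proof.
by move=> TV_P; rewrite Aq_guarded guarded_sumE // => y x ->; rewrite mul0r.
Qed.

Lemma Bq_EFin T V : (forall y x, W x y = 0 -> T y * V y x = 0) ->
  Bq W T V = (Bq_real T V)%:E.
Proof.
by move=> TV_W; rewrite Bq_guarded guarded_sumE // => y x ->; rewrite mul0r.
Qed.

Definition abs_cont t := forall y x, P x * W x y = 0 ->
  t.1.1 y * t.1.2 y x = 0 /\ t.1.1 y * t.2 y x = 0.

Lemma abs_cont_Ffun t : Ffun W P Rr K t != +oo%E -> abs_cont t.
Proof.
rewrite /Ffun Dkl_guarded Aq_guarded Bq_guarded => F_fin.
have [/guarded_sum_support D_fin /guarded_sum_support A_fin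
    /guarded_sum_support B_fin] := add_pospart_neqy
  (guarded_sum_neqNy _ _ _) (guarded_sum_neqNy _ _ _) (guarded_sum_neqNy _ _ _)
  F_fin.
move=> y x PW0; split; first exact: D_fin.
by move/eqP: PW0; rewrite mulf_eq0 => /orP[]/eqP => [/A_fin|/B_fin].
Qed.

Section AbsCont.
Variables (t : triple) (t_ac : abs_cont t).

Lemma abs_cont_P y x : P x = 0 -> t.1.1 y * t.2 y x = 0.
Proof. by move=> P0; have [|//] := @t_ac y x; rewrite P0 mul0r. Qed.

Lemma abs_cont_W y x : W x y = 0 ->
  t.1.1 y * t.1.2 y x = 0 /\ t.1.1 y * t.2 y x = 0.
Proof. by move=> W0; apply: t_ac; rewrite W0 mulr0. Qed.

Lemma abs_cont_BqE : Bq W t.1.1 t.1.2 = (Bq_real t.1.1 t.1.2)%:E.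
Proof. by apply: Bq_EFin => y x /abs_cont_W[]. Qed.

Lemma abs_cont_BqtE : Bq W t.1.1 t.2 = (Bq_real t.1.1 t.2)%:E.
Proof. by apply: Bq_EFin => y x /abs_cont_W[]. Qed.

Lemma abs_cont_FfunE : Ffun W P Rr K t = (Ffun_real t)%:E.
Proof.
rewrite /Ffun abs_cont_BqtE Dkl_EFin; last by move=> y x /t_ac[].
rewrite Aq_EFin; last exact: abs_cont_P.
rewrite /pospart.
by rewrite -!EFinB -EFin_max -EFinD -EFin_max -EFinD.
Qed.

End AbsCont.

(* E1 needs B_{TV~} <= B_{TV} + eps <= K and E2 needs K <= B_{TV} + eps. *)
Definition feasible (eps : R) : set triple := [set t | triples t /\
  (mine K%:E (Bq W t.1.1 t.2) <= Bq W t.1.1 t.1.2 + eps%:E)%E].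

Lemma Ee_feasible eps :
  Ee W P Rr K eps = ereal_inf (Ffun W P Rr K @` feasible eps).
Proof.
apply/eqP; rewrite eq_le; apply/andP; split.
  apply: le_ereal_inf_tmp => _ [t [t_tr t_feas] <-]; rewrite /Ee ge_min.
  have [KB|BK] := leP K%:E (Bq W t.1.1 t.1.2 + eps%:E).
    by apply/orP; right; apply: ereal_inf_lbound; exists t.
  apply/orP; left; apply: ereal_inf_lbound; exists t => //; split => //.
  by split; [move: t_feas; rewrite ge_min leNgt BK | exact: ltW].
rewrite /Ee le_min; apply/andP.
split; apply: ereal_inf_le_tmp => _ [t [t_tr t_E] <-].
  by exists t => //; split => //; rewrite ge_min t_E.1 orbT.
by exists t => //; split => //; rewrite ge_min t_E.
Qed.

Lemma Ee_nonincreasing : nonincreasing_fun (Ee W P Rr K).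
Proof.
move=> d1 d2 d12; rewrite !Ee_feasible.
apply: ereal_inf_le_tmp => _ [t [t_tr t_feas] <-]; exists t => //; split => //.
by apply: le_trans t_feas _; apply: leeD => //; rewrite lee_fin.
Qed.

End RateFunction.

Section Coordinates.
Import ArrowAsProduct.
Context {R : realType} {X Y : finType} (W : X -> Y -> R) (P : X -> R) (Rr K : R).
Hypotheses (W_cond : is_cond W) (P_dist : is_dist P).
Local Notation triple := (@triple R X Y).

Definition triple_coord := ((Y + Y * X) + Y * X)%type.

Definition triple_of (f : triple_coord -> R) : triple :=
  ((fun y => f (inl (inl y)), fun y x => f (inl (inr (y, x)))),
   fun y x => f (inr (y, x))).

Definition coords_of (t : triple) : triple_coord -> R := fun z =>
  match z with
  | inl (inl y) => t.1.1 y
  | inl (inr (y, x)) => t.1.2 y x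
  | inr (y, x) => t.2 y x
  end.

Lemma coords_ofK : cancel coords_of triple_of.
Proof. by case=> [[]]. Qed.

Lemma continuous_coord (z : triple_coord) :
  continuous (fun f : triple_coord -> R => f z).
Proof. exact: (@proj_continuous triple_coord (fun=> R) z). Qed.

Lemma continuous_Dkl_real :
  continuous (fun f => Dkl_real W P (triple_of f).1.1 (triple_of f).1.2).
Proof.
apply: continuous_sumr => y; apply: continuous_sumr => x /=.
have [_|PW_neq0] := eqVneq (P x * W x y) 0; first exact: cst_continuous.
have PW_gt0 : 0 < P x * W x y.
  by rewrite lt_def PW_neq0 mulr_ge0 //; [exact: P_dist.1 | exact: (W_cond x).1].
move=> f; apply: (continuous_comp
  (f := fun f : triple_coord -> R => f (inl (inl y)) * f (inl (inr (y, x))))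
  (g := fun u => u * ln (u / (P x * W x y)))).
  by apply: continuous_mul; exact: continuous_coord.
exact: continuous_mul_ln_div.
Qed.

Lemma continuous_Aq_real :
  continuous (fun f => Aq_real P (triple_of f).1.1 (triple_of f).2).
Proof.
apply: continuous_sumr => y; apply: continuous_sumr => x /=.
have [_|P_neq0] := eqVneq (P x) 0; first exact: cst_continuous.
have P_gt0 : 0 < P x by rewrite lt_def P_neq0; exact: P_dist.1.
have -> : (fun f : triple_coord -> R =>
      f (inl (inl y)) * f (inr (y, x)) * ln (f (inr (y, x)) / P x)) =
    (fun f => f (inl (inl y)) * (f (inr (y, x)) * ln (f (inr (y, x)) / P x))).
  by apply/funext => f; rewrite mulrA.
apply: continuous_mul; first exact: continuous_coord.
move=> f; apply: (continuous_comp (f := fun f : triple_coord -> R => f (inr (y, x)))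
  (g := fun u => u * ln (u / P x))); first exact: continuous_coord.
exact: continuous_mul_ln_div.
Qed.

Lemma continuous_Bq_real (i : Y -> X -> triple_coord) :
  continuous (fun f => Bq_real W (triple_of f).1.1 (fun y x => f (i y x))).
Proof.
apply: continuous_sumr => y; apply: continuous_sumr => x /=.
have [_|_] := eqVneq (W x y) 0; first exact: cst_continuous.
apply: continuous_mul; last exact: cst_continuous.
by apply: continuous_mul; exact: continuous_coord.
Qed.

Lemma continuous_Ffun_real : continuous (fun f => Ffun_real W P Rr K (triple_of f)).
Proof.
apply: continuous_add; first exact: continuous_Dkl_real.
apply: continuous_maxl; apply: continuous_add.
  by apply: continuous_add; [exact: continuous_Aq_real | exact: cst_continuous].
apply: continuous_maxl; apply: continuous_add; last exact: cst_continuous.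
exact: (continuous_Bq_real (i := fun y x => inr (y, x))).
Qed.

End Coordinates.

Lemma dist_ge0_le1 {R : realType} {A : finType} (p : A -> R) : is_dist p ->
  forall a, 0 <= p a <= 1.
Proof.
move=> [p_ge0 p_sum1] a; rewrite p_ge0 -p_sum1 (bigD1 a) //= lerDl.
by apply: sumr_ge0 => i _; exact: p_ge0.
Qed.

Section Sublevel.
Import ArrowAsProduct.
Context {R : realType} {X Y : finType} (W : X -> Y -> R) (P : X -> R) (Rr K : R).
Hypotheses (W_cond : is_cond W) (P_dist : is_dist P).
Local Notation triple := (@triple R X Y).
Local Notation triple_coord := (@triple_coord X Y).

(* On [abs_cont] triples F is the continuous function [Ffun_real]. *)
Definition sublevel (c eps : R) : set triple :=
  [set t | [/\ triples t, abs_cont W P t, Ffun_real W P Rr K t <= c &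
  Num.min K (Bq_real W t.1.1 t.2) <= Bq_real W t.1.1 t.1.2 + eps]].

Lemma sublevel_nested c d1 d2 : d1 <= d2 -> sublevel c d1 `<=` sublevel c d2.
Proof.
move=> d12 t [t_tr t_ac t_le t_feas]; split => //.
by apply: le_trans t_feas _; rewrite lerD2l.
Qed.

Lemma sublevel_cap c t : (forall d, 0 < d -> sublevel c d t) -> sublevel c 0 t.
Proof.
move=> t_sub; have [t_tr t_ac t_le _] := t_sub 1 ltr01; split => //.
by rewrite addr0; apply/ler_addgt0Pr => d /t_sub[].
Qed.

Lemma Ee_le_sublevel c eps t : sublevel c eps t -> (Ee W P Rr K eps <= c%:E)%E.
Proof.
move=> [t_tr t_ac t_le t_feas]; rewrite Ee_feasible.
apply: ge_ereal_inf; exists (Ffun W P Rr K t).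
  exists t => //; split => //.
  by rewrite (abs_cont_BqE t_ac) (abs_cont_BqtE t_ac) -EFinD -EFin_min lee_fin.
by rewrite (abs_cont_FfunE Rr K t_ac).
Qed.

Lemma sublevel_of_Ee_lt c eps : (Ee W P Rr K eps < c%:E)%E -> sublevel c eps !=set0.
Proof.
rewrite Ee_feasible => /ereal_inf_lt[_ [t [t_tr t_feas] <-] F_lt].
have t_ac : abs_cont W P t.
  apply: (abs_cont_Ffun (Rr := Rr) (K := K)).
  by rewrite lt_eqF // (lt_le_trans F_lt) ?leey.
exists t; split => //.
  by move: F_lt; rewrite (abs_cont_FfunE Rr K t_ac) lte_fin => /ltW.
by move: t_feas; rewrite (abs_cont_BqE t_ac) (abs_cont_BqtE t_ac)
  -EFinD -EFin_min lee_fin.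
Qed.

Lemma sublevel_unit_cube c eps (f : triple_coord -> R) :
  sublevel c eps (triple_of f) -> forall z, `[0, 1]%classic (f z).
Proof.
move=> [[T_dist [V_cond Vt_cond]] _ _ _] [[y|[y x]]|[y x]]; rewrite /= in_itv /=.
- exact: (dist_ge0_le1 T_dist y).
- exact: (dist_ge0_le1 (V_cond y) x).
- exact: (dist_ge0_le1 (Vt_cond y) x).
Qed.

Lemma closed_abs_cont : closed [set f | abs_cont W P (triple_of f)].
Proof.
apply: closed_forall => y; apply: closed_forall => x; apply: closed_forall => _.
apply: closedI; apply: closed_eq_continuous; try exact: cst_continuous.
all: by apply: continuous_mul; exact: continuous_coord.
Qed.

Lemma closed_triples : closed [set f : triple_coord -> R | triples (triple_of f)].
Proof.
have closed_cond (i : Y -> X -> triple_coord) :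
    closed [set f : triple_coord -> R | is_cond (fun y x => f (i y x))].
  apply: closed_forall => y; apply: (closed_is_dist (p := fun f x => f (i y x))).
  by move=> x; exact: continuous_coord.
apply: closedI; last by apply: closedI; exact: closed_cond.
apply: (closed_is_dist (p := fun f y => f (inl (inl y)))).
by move=> y; exact: continuous_coord.
Qed.

Lemma closed_sublevel c eps : closed (triple_of @^-1` sublevel c eps).
Proof.
have -> : triple_of @^-1` sublevel c eps =
    [set f | triples (triple_of f)] `&` [set f | abs_cont W P (triple_of f)] `&`
    [set f | Ffun_real W P Rr K (triple_of f) <= c] `&`
    [set f | Num.min K (Bq_real W (triple_of f).1.1 (triple_of f).2) <=
             Bq_real W (triple_of f).1.1 (triple_of f).1.2 + eps].
  by apply/seteqP; split => f /= => [[]|[[[]]]].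
apply: closedI; first apply: closedI; first apply: closedI.
- exact: closed_triples.
- exact: closed_abs_cont.
- apply: closed_le_continuous; last exact: cst_continuous.
  exact: continuous_Ffun_real.
- apply: closed_le_continuous.
    apply: continuous_minl.
    exact: (continuous_Bq_real (i := fun y x => inr (y, x))).
  apply: continuous_add; last exact: cst_continuous.
  exact: (continuous_Bq_real (i := fun y x => inl (inr (y, x)))).
Qed.

Lemma Ee_lsc_right (c : R) : (c%:E < Ee W P Rr K 0)%E ->
  exists2 d, 0 < d & (c%:E <= Ee W P Rr K d)%E.
Proof.
move=> c_lt; apply: contrapT => no_d.
have Ee_lt d : 0 < d -> (Ee W P Rr K d < c%:E)%E.
  by move=> d_gt0; rewrite ltNge; apply/negP => c_le; apply: no_d; exists d.
have cube_compact := tychonoff (fun _ : triple_coord => @segment_compact R 0 1).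
have [f f_sub] : exists f, forall d, 0 < d -> sublevel c d (triple_of f).
  apply: (compact_nested_closed cube_compact) => [d _|d _|d|d1 d2 _].
  - by move=> f /sublevel_unit_cube.
  - exact: closed_sublevel.
  - move=> /Ee_lt/sublevel_of_Ee_lt[t t_sub]; exists (coords_of t).
    by rewrite /= coords_ofK.
  - by move=> d12 f /(sublevel_nested d12).
have := Ee_le_sublevel (sublevel_cap f_sub).
by rewrite leNgt c_lt.
Qed.

End Sublevel.

Theorem lemma3 (R : realType) (X Y : finType) (W : X -> Y -> R) (P : X -> R)
    (Rr K : R) :
  is_cond W -> is_dist P -> 0 < Rr -> 0 < K ->
  Ee W P Rr K eps @[eps --> 0^'+] --> Ee W P Rr K 0.
Proof.
move=> W_cond P_dist _ _; apply: nonincreasing_cvg_at_right.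
  exact: Ee_nonincreasing.
exact: Ee_lsc_right.
Qed.
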